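(* The topological Markov shift $(\Omega,\sigma)$ is topologically mixing and has the BIP property.
   Context: For $n\ge1$ let $\mathcal A_n=\{(\mathbf1,k)_n:1\le k\le n+1\}\cup\{(\mathbf2,1)_n\}\cup\{(\mathbf3,k)_n:1\le k\le n\}$; for $e=(\mathbf t,k)_n$ its type is $\mathbf t_e=\mathbf t$. For $\mathbf t\in\{\mathbf1,\mathbf2,\mathbf3\}$ and $\hat e\in\mathcal A_n$, $\mathbf t\to\hat e$ iff $(\mathbf t,\hat e)$ is $(\mathbf1,(\mathbf2,1)_n)$, $(\mathbf2,(\mathbf1,k)_n)$ with $k\le n+1$, $(\mathbf2,(\mathbf3,k)_n)$ with $k\le n$, $(\mathbf3,(\mathbf1,k)_n)$ with $k\le n$, or $(\mathbf3,(\mathbf3,k)_n)$ with $k\le n-1$; for $e,\hat e$ in the alphabets, $e\to\hat e$ iff $\mathbf t_e\to\hat e$. $\mathcal A=\bigsqcup_{n\ge1}\mathcal A_n$ (countable alphabet); $\Omega=\{x_1x_2\cdots\in\mathcal A^{\mathbb N}:x_j\to x_{j+1}\ \forall j\}$ with metric $2^{-|x\wedge y|}$ and left shift $\sigma$. Topologically mixing: for all $e,\hat e\in\mathcal A$ there is $N$ such that for all $n\ge N$ there is an admissible word of length $n$ from $e$ to $\hat e$. BIP: there is a finite $\mathcal S\subset\mathcal A$ such that for every $e\in\mathcal A$ there are $s_1,s_2\in\mathcal S$ with $s_1\to e\to s_2$. *)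

From Stdlib Require Import Arith Lia List.

Inductive typ := T1 | T2 | T3.

(* A letter (t, k)_n is encoded by its type t, its level n and its index k. *)
Record letter := Letter { ltyp : typ; llev : nat; lidx : nat }.

Definition inA (e : letter) : Prop :=
  1 <= llev e /\
  match ltyp e with
  | T1 => 1 <= lidx e <= llev e + 1
  | T2 => lidx e = 1
  | T3 => 1 <= lidx e <= llev e
  end.

Definition typ_to (t : typ) (eh : letter) : Prop :=
  match t, ltyp eh with
  | T1, T2 => lidx eh = 1
  | T2, T1 => lidx eh <= llev eh + 1
  | T2, T3 => lidx eh <= llev eh
  | T3, T1 => lidx eh <= llev eh
  | T3, T3 => lidx eh <= llev eh - 1
  | _, _ => False
  end.

Definition trans (e eh : letter) : Prop := typ_to (ltyp e) eh.

Definition Omega (x : nat -> letter) : Prop :=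
  (forall j, inA (x j)) /\ (forall j, trans (x j) (x (S j))).

Definition admissible_word (m : nat) (e eh : letter) (w : nat -> letter) : Prop :=
  1 <= m /\ w 0 = e /\ w (m - 1) = eh /\
  (forall i, i < m -> inA (w i)) /\
  (forall i, i + 1 < m -> trans (w i) (w (i + 1))).

Definition topologically_mixing : Prop :=
  forall e eh, inA e -> inA eh ->
    exists N, forall m, N <= m -> exists w, admissible_word m e eh w.

Definition BIP : Prop :=
  exists S : list letter, (forall s, In s S -> inA s) /\
    forall e, inA e -> exists s1 s2, In s1 S /\ In s2 S /\ trans s1 e /\ trans e s2.

(** The letter (2,1)_1 is a hub: it lies on cycles of lengths 2 and 3
    ((2,1)_1 -> (1,1)_1 -> (2,1)_1 and (2,1)_1 -> (3,1)_1 -> (1,1)_1 -> (2,1)_1),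
    hence on cycles of every length >= 2, and every letter reaches it, and is
    reached from it, in at most two steps.  This gives mixing; the two letters
    (1,1)_1 and (2,1)_1 already witness BIP. *)
From Stdlib Require Import Arith Lia List.

Inductive walk : nat -> letter -> letter -> Prop :=
  | walk_nil e : inA e -> walk 0 e e
  | walk_cons k e f g : inA e -> trans e f -> walk k f g -> walk (S k) e g.

Lemma walk_admissible_word k e g :
  walk k e g -> exists w, admissible_word (S k) e g w.
Proof.
  induction 1 as [e He | k e f g He Hef _ [w (_ & Hw0 & Hwk & Hin & Htr)]].
  - exists (fun _ => e); unfold admissible_word.
    split; [lia | split; [reflexivity | split; [reflexivity | split]]];
      intros; [assumption | lia].
  - exists (fun i => match i with 0 => e | S j => w j end).
    unfold admissible_word; replace (S k - 1) with k in Hwk by lia.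
    split; [lia | split; [reflexivity | split; [exact Hwk | split]]].
    + intros [|j] Hj; [exact He | apply Hin; lia].
    + intros [|j] Hj; cbn.
      * rewrite Hw0; exact Hef.
      * rewrite <- Nat.add_1_r; apply Htr; lia.
Qed.

Lemma walk_concat m n e f g : walk m e f -> walk n f g -> walk (m + n) e g.
Proof.
  induction 1; intros; [assumption | econstructor; eauto].
Qed.

Lemma walk_step e f : inA e -> inA f -> trans e f -> walk 1 e f.
Proof.
  intros; econstructor; eauto using walk_nil.
Qed.

Definition e11 := Letter T1 1 1.
Definition hub := Letter T2 1 1.
Definition e31 := Letter T3 1 1.

Ltac check_letters := unfold inA, trans, typ_to; cbn; lia.

Definition entry (e : letter) : letter :=
  match ltyp e with T2 => e11 | _ => hub end.

Definition exit (e : letter) : letter :=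
  match ltyp e with T1 => hub | _ => e11 end.

Lemma inA_entry e : inA (entry e).
Proof. destruct e as [[] n k]; check_letters. Qed.

Lemma inA_exit e : inA (exit e).
Proof. destruct e as [[] n k]; check_letters. Qed.

Lemma trans_entry e : inA e -> trans (entry e) e.
Proof. destruct e as [[] n k]; check_letters. Qed.

Lemma trans_exit e : trans e (exit e).
Proof. destruct e as [[] n k]; check_letters. Qed.

Lemma walk_hub_hub s : 2 <= s -> walk s hub hub.
Proof.
  assert (cycle2 : walk 2 hub hub).
  { apply (walk_concat 1 1 _ e11); apply walk_step; check_letters. }
  assert (cycle3 : walk 3 hub hub).
  { apply (walk_concat 1 2 _ e31); [apply walk_step; check_letters |].
    apply (walk_concat 1 1 _ e11); apply walk_step; check_letters. }
  induction s as [s IH] using lt_wf_ind; intros Hs.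
  destruct (Nat.eq_dec s 2) as [-> | ]; [exact cycle2 |].
  destruct (Nat.eq_dec s 3) as [-> | ]; [exact cycle3 |].
  replace s with (s - 2 + 2) by lia.
  apply walk_concat with hub; [apply IH |]; auto; lia.
Qed.

Lemma walk_exit_hub e : exists p, p <= 1 /\ walk p (exit e) hub.
Proof.
  destruct e as [[] n k].
  - exists 0; split; [lia | apply walk_nil; check_letters].
  - exists 1; split; [lia | apply walk_step; check_letters].
  - exists 1; split; [lia | apply walk_step; check_letters].
Qed.

Lemma walk_hub_entry e : exists q, q <= 1 /\ walk q hub (entry e).
Proof.
  destruct e as [[] n k].
  - exists 0; split; [lia | apply walk_nil; check_letters].
  - exists 1; split; [lia | apply walk_step; check_letters].
  - exists 0; split; [lia | apply walk_nil; check_letters].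
Qed.

Lemma walk_long e eh s : inA e -> inA eh -> 6 <= s -> walk s e eh.
Proof.
  intros He Heh Hs.
  destruct (walk_exit_hub e) as [p [Hp Hexit]].
  destruct (walk_hub_entry eh) as [q [Hq Hentry]].
  replace s with (1 + (p + ((s - 4 - p - q + 2) + (q + 1)))) by lia.
  apply walk_concat with (exit e); [apply walk_step; auto using inA_exit, trans_exit |].
  apply walk_concat with hub; [exact Hexit |].
  apply walk_concat with hub; [apply walk_hub_hub; lia |].
  apply walk_concat with (entry eh); [exact Hentry |].
  apply walk_step; auto using inA_entry, trans_entry.
Qed.

Theorem proposition4p1 : topologically_mixing /\ BIP.
Proof.
  split.
  - intros e eh He Heh; exists 7; intros m Hm.
    replace m with (S (m - 1)) by lia.
    apply walk_admissible_word, walk_long; auto; lia.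
  - exists (e11 :: hub :: nil); split.
    + intros s [<- | [<- | []]]; check_letters.
    + intros e He; exists (entry e), (exit e).
      repeat split; auto using trans_entry, trans_exit;
        destruct e as [[] n k]; cbn; auto.
Qed.
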